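(* Let $B$ be a commutative ring with identity, $A$ a dense subring of $B$, and $M$ a maximal ideal of $B$. Then there is no prime ideal $P$ of $B$ such that $M\cap A\subsetneq P\cap A$.
   Context: All rings are commutative with identity; subrings contain the identity. A subring $A$ of $B$ is dense in $B$ if for every ideal $I$ of $B$ and every $b\in B\setminus \operatorname{rad}(I)$ there exists $a\in B\setminus\operatorname{rad}(I)$ with $ab\in A$. *)

From mathcomp Require Import all_boot all_algebra.
Set Implicit Arguments. Unset Strict Implicit. Unset Printing Implicit Defensive.
Import GRing.Theory.
Local Open Scope ring_scope.

Definition is_ideal (B : comPzRingType) (I : B -> Prop) : Prop :=
  [/\ I 0,
      (forall x y, I x -> I y -> I (x + y)) &
      (forall r x, I x -> I (r * x))].

Definition rad (B : comPzRingType) (I : B -> Prop) : B -> Prop :=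
  fun x => exists n : nat, I (x ^+ n).

Definition is_prime_ideal (B : comPzRingType) (P : B -> Prop) : Prop :=
  [/\ is_ideal P, ~ P 1 & (forall x y, P (x * y) -> P x \/ P y)].

Definition is_maximal_ideal (B : comPzRingType) (M : B -> Prop) : Prop :=
  [/\ is_ideal M, ~ M 1 &
      (forall J : B -> Prop, is_ideal J -> (forall x, M x -> J x) ->
         J 1 \/ (forall x, J x -> M x))].

Definition is_subring (B : comPzRingType) (A : B -> Prop) : Prop :=
  [/\ A 1,
      (forall x y, A x -> A y -> A (x - y)) &
      (forall x y, A x -> A y -> A (x * y))].

Definition is_dense (B : comPzRingType) (A : B -> Prop) : Prop :=
  forall I : B -> Prop, is_ideal I ->
    forall b, ~ rad I b -> exists a, ~ rad I a /\ A (a * b).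

From Pilot Require Import Defs.
From mathcomp Require Import all_boot all_algebra.
(* Re-imported so that [rad] refers to the radical of Defs, not to mathcomp's. *)
Import Pilot.Defs.
Set Implicit Arguments.
Unset Strict Implicit.
Local Open Scope ring_scope.
Import GRing.Theory.

(* Suppose x lies in P ∩ A but not in M.  By maximality 1 = m + b x with
   m ∈ M, and m ∉ P since x ∈ P.  As rad P = P, density yields a ∉ P with
   a m ∈ A; then a m ∈ M ∩ A ⊆ P although neither a nor m is in P. *)

Section Ideals.

Variable B : comPzRingType.

Lemma rad_prime_ideal (P : B -> Prop) (y : B) :
  is_prime_ideal P -> rad P y -> P y.
Proof.
case=> _ nP1 Pmul [n]; elim: n => [|n IHn]; first by rewrite expr0.
by rewrite exprS => /Pmul [].
Qed.

Definition ideal_add_principal (I : B -> Prop) (x : B) : B -> Prop :=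
  fun y => exists m b, I m /\ y = m + b * x.

Lemma ideal_add_principal_is_ideal (I : B -> Prop) (x : B) :
  is_ideal I -> is_ideal (ideal_add_principal I x).
Proof.
case=> I0 ID IM; split.
- by exists 0, 0; rewrite mul0r addr0.
- move=> _ _ [m [b [Im ->]]] [m' [b' [Im' ->]]].
  by exists (m + m'), (b + b'); rewrite mulrDl addrACA; split; first exact: ID.
- move=> r _ [m [b [Im ->]]].
  by exists (r * m), (r * b); rewrite mulrDr mulrA; split; first exact: IM.
Qed.

Lemma maximal_ideal_comaximal (M : B -> Prop) (x : B) :
  is_maximal_ideal M -> ~ M x -> exists m b, M m /\ 1 = m + b * x.
Proof.
case=> Mideal _ Mmax nMx.
have sub_Mx : forall y, M y -> ideal_add_principal M x y.
  by move=> y My; exists y, 0; rewrite mul0r addr0.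
have [|Mx_sub] := Mmax _ (ideal_add_principal_is_ideal x Mideal) sub_Mx; first by [].
exfalso; apply/nMx/Mx_sub.
by exists 0, 1; rewrite add0r mul1r; split=> //; case: Mideal.
Qed.

Lemma dense_notin_prime_ideal (A P : B -> Prop) (y : B) :
  is_dense A -> is_prime_ideal P -> ~ P y -> exists a, ~ P a /\ A (a * y).
Proof.
move=> Adense Pprime nPy.
have nradPy : ~ rad P y by move/(rad_prime_ideal Pprime).
have [|a [nPa Aay]] := Adense P _ y nradPy; first by case: Pprime.
by exists a; split=> // Pa; apply: nPa; exists 1%N; rewrite expr1.
Qed.

End Ideals.

Theorem corollary4p3 (B : comPzRingType) (A M : B -> Prop) :
  is_subring A -> is_dense A -> is_maximal_ideal M ->
  ~ (exists P : B -> Prop, is_prime_ideal P /\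
       (forall x, M x /\ A x -> P x /\ A x) /\
       (exists x, (P x /\ A x) /\ ~ (M x /\ A x))).
Proof.
move=> _ Adense Mmax [P [Pprime [MA_sub_PA [x [[Px Ax] nMAx]]]]].
have [[_ PD PM] nP1 Pmul] := Pprime.
have [m [b [Mm Ex]]] : exists m b, M m /\ 1 = m + b * x.
  by apply: maximal_ideal_comaximal => // Mx; apply: nMAx.
have nPm : ~ P m by move=> Pm; apply: nP1; rewrite Ex; apply: PD => //; apply: PM.
have [a [nPa Aam]] := dense_notin_prime_ideal Adense Pprime nPm.
have Mam : M (a * m) by case: Mmax => [[_ _ MM] _ _]; apply: MM.
have [Pam _] := MA_sub_PA _ (conj Mam Aam).
by case: (Pmul _ _ Pam).
Qed.
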